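(* $\lim_{m\to\infty}\frac{\beta_c(m)}{m/2}=1$.
   Context: Let $(\lambda_i)_{i\ge0}$ be the Thue–Morse sequence: $\lambda_0=0$, $\lambda_{2i}=\lambda_i$, $\lambda_{2i+1}=1-\lambda_i$. For $m\in\mathbb{N}$ and $i\ge1$ set $\lambda_i(m)=k+\lambda_i-\lambda_{i-1}$ if $m=2k$ and $\lambda_i(m)=k+\lambda_i$ if $m=2k+1$. $\beta_c(m)$ is the unique solution $\beta>1$ of $\sum_{i=1}^\infty\lambda_i(m)\beta^{-i}=1$. *)

From Stdlib Require Import Reals ZArith Arith ClassicalEpsilon.
From Coquelicot Require Import Coquelicot.
Open Scope R_scope.

(* Thue--Morse sequence: tm 0 = 0, tm (2i) = tm i, tm (2i+1) = 1 - tm i. *)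
Fixpoint tm_pos (p : positive) : bool :=
  match p with
  | xH => true
  | xO q => tm_pos q
  | xI q => negb (tm_pos q)
  end.

Definition tm_bool (n : nat) : bool :=
  match n with O => false | S _ => tm_pos (Pos.of_nat n) end.

Definition tm (n : nat) : R := if tm_bool n then 1 else 0.

(* lambda_i(m), meaningful for i >= 1:
   m = 2k   : k + lambda_i - lambda_{i-1}
   m = 2k+1 : k + lambda_i *)
Definition lam (m i : nat) : R :=
  if Nat.even m then INR (Nat.div2 m) + tm i - tm (i - 1)
  else INR (Nat.div2 m) + tm i.

Definition is_beta_c (m : nat) (beta : R) : Prop :=
  1 < beta /\ is_series (fun n : nat => lam m (S n) / beta ^ (S n)) 1.

(* beta_c(m): the (unique, per the paper) solution, chosen by epsilon. *)
Definition beta_c (m : nat) : R :=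
  epsilon (inhabits 0) (is_beta_c m).

(* Since the Thue--Morse sequence is 0/1-valued, every coefficient lambda_i(m)
   lies within 1 of k = floor(m/2).  Comparing the defining series with
   geometric series then traps beta_c(m) - 1 between k - 1 and k + 1, so
   |2 beta_c(m) - m| is bounded and beta_c(m) / (m/2) -> 1.  Existence of the
   root (needed to make the epsilon-definition meaningful) comes from the
   intermediate value theorem applied to the power series x sum a_n x^n on
   (0, 1). *)

From Stdlib Require Import Reals Ranalysis5 Lra Lia.
From Stdlib Require Import ClassicalEpsilon FunctionalExtensionality.
From Coquelicot Require Import Coquelicot.
Open Scope R_scope.

Lemma is_series_le (a b : nat -> R) (la lb : R) :
  (forall n, a n <= b n) -> is_series a la -> is_series b lb -> la <= lb.
Proof.
  intros Hab Ha Hb.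
  apply (is_lim_seq_le (sum_n a) (sum_n b) la lb); [|exact Ha|exact Hb].
  intro n; rewrite !sum_n_Reals; apply sum_Rle; auto.
Qed.

Lemma is_series_geom_succ (c q : R) : Rabs q < 1 ->
  is_series (fun n => c * q ^ S n) (c * q / (1 - q)).
Proof.
  intros Hq.
  assert (Hq1 : 1 - q <> 0) by (apply Rabs_def2 in Hq; lra).
  pose proof (is_series_scal_l (c * q) _ _ (is_series_geom q Hq)) as Hgeom.
  change scal with Rmult in Hgeom; simpl in Hgeom.
  replace (c * q / (1 - q)) with (c * q * / (1 - q)) by (field; exact Hq1).
  eapply is_series_ext; [|exact Hgeom].
  intro n; simpl; ring.
Qed.

Lemma is_series_pow_succ_bounds (a : nat -> R) (L U q s : R) :
  0 < q < 1 -> (forall n, L <= a n <= U) ->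
  is_series (fun n => a n * q ^ S n) s ->
  L * q <= s * (1 - q) <= U * q.
Proof.
  intros Hq Ha Hs.
  assert (Hq' : Rabs q < 1) by (rewrite Rabs_right; lra).
  assert (Hpow : forall n, 0 < q ^ S n) by (intro; apply pow_lt; lra).
  assert (HL : L * q / (1 - q) <= s).
  { refine (is_series_le _ _ _ _ _ (is_series_geom_succ L q Hq') Hs).
    intro n; apply Rmult_le_compat_r; [apply Rlt_le, Hpow | apply Ha]. }
  assert (HU : s <= U * q / (1 - q)).
  { refine (is_series_le _ _ _ _ _ Hs (is_series_geom_succ U q Hq')).
    intro n; apply Rmult_le_compat_r; [apply Rlt_le, Hpow | apply Ha]. }
  assert (Hdiv : forall c, c * q / (1 - q) * (1 - q) = c * q)
    by (intro; field; lra).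
  split; rewrite <- Hdiv; apply Rmult_le_compat_r; lra.
Qed.

Lemma CV_radius_ge_1 (a : nat -> R) (B : R) :
  (forall n, Rabs (a n) <= B) -> Rbar_le 1 (CV_radius a).
Proof.
  intros Ha.
  apply (proj1 (CV_radius_bounded a)).
  exists B; intro n; rewrite pow1, Rmult_1_r; apply Ha.
Qed.

Lemma is_series_pow_succ_PSeries (a : nat -> R) (x : R) :
  Rbar_lt (Rabs x) (CV_radius a) ->
  is_series (fun n => a n * x ^ S n) (x * PSeries a x).
Proof.
  intros Hx.
  pose proof (PSeries_correct a x (CV_radius_inside a x Hx)) as Hps.
  apply is_pseries_R, (is_series_scal_l x) in Hps.
  change scal with Rmult in Hps; simpl in Hps.
  eapply is_series_ext; [|exact Hps].
  intro n; simpl; ring.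
Qed.

Lemma exists_is_series_pow_succ_eq_1 (a : nat -> R) (L U : R) :
  0 < L -> (forall n, L <= a n <= U) ->
  exists x, 0 < x < 1 /\ is_series (fun n => a n * x ^ S n) 1.
Proof.
  intros HL Ha.
  assert (Hradius : forall x, 0 < x < 1 -> Rbar_lt (Rabs x) (CV_radius a)).
  { intros x Hx.
    apply (Rbar_lt_le_trans _ 1); [simpl; rewrite Rabs_right; lra|].
    apply (CV_radius_ge_1 a U); intro n.
    specialize (Ha n); rewrite Rabs_right; lra. }
  assert (Hbounds : forall x, 0 < x < 1 ->
            L * x <= x * PSeries a x * (1 - x) <= U * x).
  { intros x Hx.
    apply (is_series_pow_succ_bounds a); auto.
    apply is_series_pow_succ_PSeries, Hradius, Hx. }
  set (g := fun x => x * PSeries a x - 1).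
  (* [U x1 < 1 - x1] forces [g x1 < 0], and [1 - x2 < L x2] forces [g x2 > 0]. *)
  set (x1 := / (U + 2)); set (x2 := 2 / (L + 2)).
  assert (HLU : L <= U) by (destruct (Ha O); lra).
  assert (Hx1 : 0 < x1 < 1) by (unfold x1; split;
    [apply Rinv_0_lt_compat | apply (Rmult_lt_reg_r (U + 2)); field_simplify]; lra).
  assert (Hx2 : 0 < x2 < 1) by (unfold x2; split;
    [apply Rdiv_lt_0_compat | apply (Rmult_lt_reg_r (L + 2)); field_simplify]; lra).
  assert (Hx12 : x1 < x2) by (unfold x1, x2;
    apply (Rmult_lt_reg_r ((U + 2) * (L + 2))); [nra | field_simplify]; lra).
  assert (Hg1 : g x1 < 0).
  { assert (U * x1 < 1 - x1)
      by (unfold x1; apply (Rmult_lt_reg_r (U + 2)); field_simplify; lra).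
    pose proof (Hbounds x1 Hx1); unfold g; nra. }
  assert (Hg2 : 0 < g x2).
  { assert (1 - x2 < L * x2)
      by (unfold x2; apply (Rmult_lt_reg_r (L + 2)); field_simplify; lra).
    pose proof (Hbounds x2 Hx2); unfold g; nra. }
  destruct (IVT_interv g x1 x2) as [x [Hx Hgx]]; auto.
  - intros y Hy; unfold g.
    apply continuity_pt_minus; [|apply continuity_pt_const; intros ? ?; reflexivity].
    apply continuity_pt_mult; [apply continuity_pt_id|].
    apply PSeries_continuity, Hradius; lra.
  - exists x; split; [lra|].
    replace 1 with (x * PSeries a x) by (unfold g in Hgx; lra).
    apply is_series_pow_succ_PSeries, Hradius; lra.
Qed.

Lemma lam_bounds (m i : nat) :
  INR (Nat.div2 m) - 1 <= lam m i <= INR (Nat.div2 m) + 1.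
Proof.
  unfold lam, tm.
  destruct (Nat.even m), (tm_bool i), (tm_bool (i - 1)); lra.
Qed.

Lemma is_beta_cE (m : nat) (b : R) :
  is_beta_c m b <->
  1 < b /\ is_series (fun n => lam m (S n) * (/ b) ^ S n) 1.
Proof.
  unfold is_beta_c.
  replace (fun n => lam m (S n) / b ^ S n)
    with (fun n => lam m (S n) * (/ b) ^ S n); [reflexivity|].
  apply functional_extensionality; intro n; rewrite pow_inv; reflexivity.
Qed.

Lemma is_beta_c_bounds (m : nat) (b : R) : is_beta_c m b ->
  INR (Nat.div2 m) <= b <= INR (Nat.div2 m) + 2.
Proof.
  intros [Hb Hs]%is_beta_cE.
  assert (Hq : 0 < / b < 1)
    by (split; [apply Rinv_0_lt_compat | rewrite <- Rinv_1;
                apply Rinv_lt_contravar]; lra).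
  pose proof (is_series_pow_succ_bounds (fun n => lam m (S n)) _ _ _ _ Hq
                (fun n => lam_bounds m (S n)) Hs).
  assert (Hbq : b * / b = 1) by (field; lra).
  split; nra.
Qed.

Lemma beta_c_spec (m : nat) : (2 <= Nat.div2 m)%nat -> is_beta_c m (beta_c m).
Proof.
  intros Hk.
  unfold beta_c; apply epsilon_spec.
  assert (Hk2 : 2 <= INR (Nat.div2 m)) by (apply (le_INR 2); exact Hk).
  destruct (exists_is_series_pow_succ_eq_1 (fun n => lam m (S n))
              (INR (Nat.div2 m) - 1) (INR (Nat.div2 m) + 1))
    as [x [Hx Hs]]; [lra | intro; apply lam_bounds |].
  exists (/ x); apply is_beta_cE; split.
  - rewrite <- Rinv_1; apply Rinv_lt_contravar; lra.
  - rewrite Rinv_inv; exact Hs.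
Qed.

Lemma beta_c_bounds (m : nat) : (4 <= m)%nat ->
  INR m - 1 <= 2 * beta_c m <= INR m + 4.
Proof.
  intros Hm.
  assert (Hdiv2 : INR m = 2 * INR (Nat.div2 m) + (if Nat.odd m then 1 else 0)).
  { rewrite (Nat.div2_odd m) at 1.
    destruct (Nat.odd m); rewrite ?plus_INR, mult_INR; simpl; ring. }
  assert (Hk : (2 <= Nat.div2 m)%nat)
    by (pose proof (Nat.div2_odd m); destruct (Nat.odd m); simpl in *; lia).
  pose proof (is_beta_c_bounds m _ (beta_c_spec m Hk)).
  destruct (Nat.odd m); lra.
Qed.

Lemma is_lim_seq_inv_INR : is_lim_seq (fun n => / INR n) 0.
Proof.
  replace (Finite 0) with (Rbar_inv p_infty) by reflexivity.
  apply is_lim_seq_inv; [apply is_lim_seq_INR | discriminate].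
Qed.

Theorem lemma4p9 :
  is_lim_seq (fun m : nat => beta_c m / (INR m / 2)) 1.
Proof.
  apply is_lim_seq_le_le_loc with
    (u := fun m => 1 - / INR m) (w := fun m => 1 + 4 * / INR m).
  - exists 4%nat; intros m Hm.
    pose proof (beta_c_bounds m Hm).
    assert (Hm4 : 4 <= INR m) by (pose proof (le_INR 4 m Hm); simpl in *; lra).
    replace (beta_c m / (INR m / 2)) with (2 * beta_c m * / INR m) by (field; lra).
    assert (0 < / INR m) by (apply Rinv_0_lt_compat; lra).
    assert (INR m * / INR m = 1) by (field; lra).
    split; nra.
  - replace (Finite 1) with (Rbar_minus 1 0) by (simpl; f_equal; ring).
    apply is_lim_seq_minus'; [apply is_lim_seq_const | apply is_lim_seq_inv_INR].
  - replace (Finite 1) with (Rbar_plus 1 (4 * 0)) by (simpl; f_equal; ring).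
    apply is_lim_seq_plus'; [apply is_lim_seq_const |].
    apply (is_lim_seq_scal_l _ 4 0), is_lim_seq_inv_INR.
Qed.
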